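(* Let $\tilde{\mathcal Z}\subseteq[0,1]^d$ and let $\mathcal Z_1,\dots,\mathcal Z_{3^d}$ be mutually disjoint subregions of $\tilde{\mathcal Z}$. Let $\Delta=\lfloor3^d/2\rfloor$. Apply an admissible algorithm with budget $n$ to any given CSO problem. If $\mathbb{P}(\tau(\tilde{\mathcal Z})\le n-\Delta)>0$, then there exists $\kappa_1$ such that $\mathbb{P}\bigl(\tau(\mathcal Z_{\kappa_1})\ge\tau(\tilde{\mathcal Z})+\Delta\bigm|\tau(\tilde{\mathcal Z})\le n-\Delta\bigr)\ge\frac12$. If $\mathbb{P}(\tau(\tilde{\mathcal Z})\le n-\Delta)<1$, then there exists $\kappa_2$ such that $\mathbb{P}\bigl(\tau(\mathcal Z_{\kappa_2})>n\bigm|\tau(\tilde{\mathcal Z})>n-\Delta\bigr)\ge\frac12$.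
   Context: A CSO problem: objective $y:[0,1]^d\to\mathbb{R}$; a query at $\mathbf{x}$ returns $Y(\mathbf{x})=y(\mathbf{x})+\varepsilon(\mathbf{x})$ with noise independent of everything else. Admissible algorithm with budget $n$: (i) $\mathbf{x}_1$ deterministic or a measurable function of a random vector $U_1$; (ii) for $t=1,\dots,n-1$, $\mathbf{x}_{t+1}$ a measurable function of $\mathbf{x}_1,Y(\mathbf{x}_1),\dots,\mathbf{x}_t,Y(\mathbf{x}_t)$ and a random vector $U_{t+1}$; (iii) output $\hat{\mathbf{x}}_n^*$ a measurable function of the full history and a random vector $U_n^*$; (iv) $\hat{\mathbf{x}}_n^*\in\{\mathbf{x}_1,\dots,\mathbf{x}_n\}$; the $U$'s are independent random vectors independent of the noise. First hitting time: $\tau(\mathcal Z)=\min\{t\in\{1,\dots,n\}:\mathbf{x}_t\in\mathcal Z\}$ if some $\mathbf{x}_t\in\mathcal Z$, and $\tau(\mathcal Z)=n+1$ otherwise. *)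

From HB Require Import structures.
From mathcomp Require Import all_boot all_order all_algebra.
From mathcomp Require Import all_classical all_reals all_analysis.
Set Implicit Arguments. Unset Strict Implicit. Unset Printing Implicit Defensive.
Import Order.TTheory GRing.Theory Num.Theory.
Local Open Scope classical_set_scope.
Local Open Scope ring_scope.

Definition rpoint (R : realType) (d : nat) := d.-tuple R.

Definition unit_cube (R : realType) (d : nat) : set (rpoint R d) :=
  [set x | forall i : 'I_d, 0 <= tnth x i <= 1].

Section Run.
Variables (R : realType) (d : nat) (T : Type) (m : nat -> nat).
Variables (y : rpoint R d -> R) (eps : rpoint R d -> T -> R).
(* U t is the random vector U_{t+1} used to choose the (t+1)-th query *)
Variable U : forall t : nat, T -> (m t).-tuple R.
(* next t (h, u) = x_{t+1}, computed from the history h = ((x_1,Y(x_1)),...,(x_t,Y(x_t)))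
   and the random vector u = U_{t+1}; for t = 0 the history is empty. *)
Variable next : forall t : nat, (t.-tuple (rpoint R d * R) * (m t).-tuple R)%type -> rpoint R d.

Fixpoint history (t : nat) (w : T) : t.-tuple (rpoint R d * R) :=
  match t with
  | 0 => [tuple]
  | t'.+1 =>
      let h := history t' w in
      let p := next (h, U t' w) in
      [tuple of rcons h (p, y p + eps p w)]
  end.

(* x_t for t >= 1 *)
Definition query (t : nat) (w : T) : rpoint R d := next (history t.-1 w, U t.-1 w).

(* first hitting time tau(Z) = min{t in 1..n : x_t \in Z}, and n+1 if no such t *)
Definition hitting_time (n : nat) (Z : set (rpoint R d)) (w : T) : nat :=
  \big[minn/n.+1]_(1 <= t < n.+1 | query t w \in Z) t.
End Run.

Definition sigma_rv (T : Type) dV (V : measurableType dV) (X : T -> V) : set (set T) :=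
  preimage_set_system setT X measurable.

Definition mutual_indep (R : realType) dT (T : measurableType dT) (P : probability T R)
    (I : finType) (F : I -> set (set T)) : Prop :=
  forall A : I -> set T, (forall i, F i (A i)) ->
    P (\bigcap_i A i) = (\prod_(i : I) P (A i))%E.

(* Admissible algorithm with budget n on the CSO problem (y, eps):
   the U's (U_1..U_n, U_n^* ) and the noise field are mutually independent. *)
Definition admissible (R : realType) (d n : nat) dT (T : measurableType dT)
    (P : probability T R) (m : nat -> nat) (mstar : nat)
    (y : rpoint R d -> R) (eps : rpoint R d -> T -> R)
    (U : forall t : nat, T -> (m t).-tuple R) (Ustar : T -> mstar.-tuple R)
    (next : forall t : nat, (t.-tuple (rpoint R d * R) * (m t).-tuple R)%type -> rpoint R d)
    (out : (n.-tuple (rpoint R d * R) * mstar.-tuple R)%type -> rpoint R d) : Prop :=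
  (forall t, measurable_fun setT (U t)) /\
  measurable_fun setT Ustar /\
  measurable_fun setT y /\
  measurable_fun setT (fun q : (rpoint R d * T)%type => eps q.1 q.2) /\
  (forall t, measurable_fun setT (@next t)) /\
  (forall t z, @unit_cube R d (@next t z)) /\
  measurable_fun setT out /\
  (forall z, out z \in [seq p.1 | p <- z.1]) /\
  mutual_indep P (fun i : 'I_n.+2 =>
        if (i < n)%N then sigma_rv (U i)
        else if (i == n :> nat) then sigma_rv Ustar
        else <<s \bigcup_(x in [set: rpoint R d]) sigma_rv (eps x) >>).

Definition cond_prob (R : realType) dT (T : measurableType dT) (P : probability T R)
    (A B : set T) : R :=
  fine (P (A `&` B)) / fine (P B).

From HB Require Import structures.
From mathcomp Require Import all_boot all_order all_algebra.
From mathcomp Require Import all_classical all_reals all_analysis.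
From mathcomp Require Import measurable_realfun ring lra zify.
Set Implicit Arguments. Unset Strict Implicit. Unset Printing Implicit Defensive.
Import Order.TTheory GRing.Theory Num.Theory.
Local Open Scope classical_set_scope.
Local Open Scope ring_scope.

(* Distinct subregions are disjoint, so at every outcome they are first hit at
   distinct times, and none of them before Zt.  Hence within any window of D
   consecutive times starting at tau(Zt) at most D subregions are first hit, so
   at least 3^d - Delta >= 3^d / 2 of them are hit late (first claim) or never
   (second claim), pointwise on the conditioning event.  Averaging the indicators
   of these events over the subregions and integrating produces one subregion
   whose conditional probability is at least 1/2. *)

Section measurable_nat_valued.
Variables (dT : measure_display) (T : measurableType dT).

Lemma measurable_fun_mem dX (X : measurableType dX) (Z : set X) :
  measurable Z -> measurable_fun setT (fun x : X => x \in Z).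
Proof.
move=> mZ; apply: (measurable_fun_bool true); rewrite setTI.
rewrite (_ : _ @^-1` _ = Z) //.
by apply/seteqP; split => x /=; [move=> /set_mem | move=> /mem_set ->].
Qed.

Lemma measurable_bigmin_nat (I : Type) (r : seq I) (N : nat) (b : I -> T -> bool)
    (F : I -> nat) :
  (forall i, measurable_fun setT (b i)) ->
  measurable_fun setT (fun w => \big[minn/N]_(i <- r | b i w) F i).
Proof.
move=> mb; elim: r => [|i r IH].
  by under eq_fun do rewrite big_nil; exact: measurable_cst.
under eq_fun do rewrite big_cons.
by apply: measurable_fun_ifT => //; exact: measurableT_comp IH.
Qed.

Lemma measurable_nat_pred (f : T -> nat) (Q : pred nat) :
  measurable_fun setT f -> measurable [set w | Q (f w)].
Proof.
by move=> mf; rewrite -[X in measurable X]setTI; apply: (mf measurableT [set a | Q a]).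
Qed.

Lemma measurable_nat_rel (f g : T -> nat) (Q : rel nat) :
  measurable_fun setT f -> measurable_fun setT g ->
  measurable [set w | Q (f w) (g w)].
Proof.
move=> mf mg.
rewrite (_ : [set w | _] = \bigcup_a (f @^-1` [set a] `&` g @^-1` [set b | Q a b])).
  apply: bigcupT_measurable => a; apply: measurableI.
  - by rewrite -[_ @^-1` _]setTI; exact: mf.
  - exact: measurable_nat_pred (Q a) mg.
by apply/seteqP; split => [w Qw|w [a _ [/= <-]]] //; exists (f w).
Qed.

End measurable_nat_valued.

Section measurable_hitting_time.
Variables (R : realType) (d : nat) (dT : measure_display) (T : measurableType dT).
Variables (m : nat -> nat) (y : rpoint R d -> R) (eps : rpoint R d -> T -> R).
Variable U : forall t : nat, T -> (m t).-tuple R.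
Variable next :
  forall t : nat, (t.-tuple (rpoint R d * R) * (m t).-tuple R)%type -> rpoint R d.
Hypothesis mU : forall t, measurable_fun setT (U t).
Hypothesis my : measurable_fun setT y.
Hypothesis meps : measurable_fun setT (fun q : (rpoint R d * T)%type => eps q.1 q.2).
Hypothesis mnext : forall t, measurable_fun setT (@next t).

Local Notation history := (history y eps U next).
Local Notation query := (query y eps U next).

Lemma measurable_history t : measurable_fun setT (history t).
Proof.
elim: t => [|t IH]; first exact: measurable_cst.
set p := fun w => next (history t w, U t w).
have mp : measurable_fun setT p.
  exact: measurableT_comp (@mnext t) (measurable_fun_pair IH (@mU t)).
have mlast : measurable_fun setT (fun w => (p w, y (p w) + eps (p w) w)).
  apply: measurable_fun_pair => //; apply: measurable_funD.
    exact: measurableT_comp my mp.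
  exact: measurableT_comp meps (measurable_fun_pair mp (@measurable_id _ T setT)).
apply/measurable_fun_tnthP => i; have [ltit|] := ltnP i t.
  rewrite (_ : _ \o _ = fun w => tnth (history t w) (Ordinal ltit)).
    exact: measurableT_comp (measurable_tnth _) IH.
  apply/funext => w /=; rewrite !(tnth_nth (p w, 0)) /=.
  by rewrite nth_rcons size_tuple ltit.
rewrite leq_eqVlt ltnNge -ltnS ltn_ord orbF => /eqP it.
rewrite (_ : _ \o _ = fun w => (p w, y (p w) + eps (p w) w)) //.
apply/funext => w /=; rewrite (tnth_nth (p w, 0)) /=.
by rewrite nth_rcons size_tuple -it ltnn eqxx.
Qed.

Lemma measurable_query t : measurable_fun setT (query t).
Proof.
apply: measurableT_comp; first exact: mnext.
by apply: measurable_fun_pair; [exact: measurable_history | exact: mU].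
Qed.

Lemma measurable_hitting_time n Z :
  measurable Z -> measurable_fun setT (hitting_time y eps U next n Z).
Proof.
move=> mZ; apply: measurable_bigmin_nat => t.
exact: measurableT_comp (measurable_fun_mem mZ) (measurable_query t).
Qed.

End measurable_hitting_time.

Section hitting_time_order.
Variables (R : realType) (d : nat) (T : Type) (m : nat -> nat).
Variables (y : rpoint R d -> R) (eps : rpoint R d -> T -> R).
Variable U : forall t : nat, T -> (m t).-tuple R.
Variable next :
  forall t : nat, (t.-tuple (rpoint R d * R) * (m t).-tuple R)%type -> rpoint R d.
Variable n : nat.

Local Notation query := (query y eps U next).
Local Notation tau := (hitting_time y eps U next n).

Lemma hitting_time_mem Z w : (tau Z w <= n)%N -> query (tau Z w) w \in Z.
Proof.
move=> le_tau_n.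
have : (tau Z w == n.+1) || (query (tau Z w) w \in Z).
  apply: (big_ind (fun v => (v == n.+1) || (query v w \in Z))) => [|a b Ka Kb|t ->];
    rewrite ?eqxx ?orbT //.
  by rewrite /minn; case: ifP.
by case/orP => // /eqP tau_n; move: le_tau_n; rewrite tau_n ltnn.
Qed.

Lemma hitting_time_gt0 Z w : (0 < tau Z w)%N.
Proof.
rewrite /hitting_time big_seq_cond.
apply: (big_ind (fun v => 0 < v)%N) => // [a b a_gt0 b_gt0|t].
  by rewrite /minn; case: ifP.
by rewrite mem_index_iota => /andP[/andP[]].
Qed.

Lemma hitting_time_sub Z1 Z2 w : Z1 `<=` Z2 -> (tau Z2 w <= tau Z1 w)%N.
Proof.
move=> Z12; rewrite /hitting_time -minEnat -leEnat.
by apply: sub_bigmin => t Z1t; apply/mem_set/Z12/set_mem.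
Qed.

Section disjoint_subregions.
Variables (I : finType) (Zt : set (rpoint R d)) (Z : I -> set (rpoint R d)).
Hypothesis sub_Zt : forall k, Z k `<=` Zt.
Hypothesis disjZ : forall k l, k != l -> Z k `&` Z l = set0.

Lemma card_hitting_time_window w lo hi : (hi <= n.+1)%N ->
  (#|[pred k | lo <= tau (Z k) w < hi]| <= hi - lo)%N.
Proof.
move=> hi_n; rewrite cardE -(size_map (fun k => tau (Z k) w)) -(size_iota lo (hi - lo)).
apply: uniq_leq_size => [|v /mapP[k]].
- rewrite map_inj_in_uniq ?enum_uniq // => k l.
  rewrite !mem_enum => /andP[_ tau_k] /andP[_ tau_l] eq_kl; apply/eqP/contraT => /disjZ.
  have /set_mem Zk_hit := hitting_time_mem (leq_trans tau_k hi_n).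
  have /set_mem Zl_hit := hitting_time_mem (leq_trans tau_l hi_n).
  by rewrite -eq_kl in Zl_hit => /seteqP[/(_ _ (conj Zk_hit Zl_hit))].
- rewrite mem_enum => /andP[lo_tau tau_hi] ->; rewrite mem_iota lo_tau /=.
  by rewrite subnKC // ltnW // (leq_ltn_trans lo_tau).
Qed.

Lemma card_hitting_time_ge w hi : (hi <= n.+1)%N ->
  (#|I| - (hi - tau Zt w) <= #|[pred k | hi <= tau (Z k) w]|)%N.
Proof.
move=> hi_n; set late := [pred k | _].
have early_window : [predC late] \subset [pred k | (tau Zt w <= tau (Z k) w < hi)%N].
  by apply/fintype.subsetP => k; rewrite !inE -ltnNge => ->; rewrite hitting_time_sub.
rewrite leq_subLR -(cardC late) addnC leq_add2r.
exact: leq_trans (subset_leq_card early_window) (card_hitting_time_window w _ hi_n).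
Qed.

Lemma card_late_subregions w D : (tau Zt w <= n - D)%N ->
  (#|I| - D <= #|[pred k | tau Zt w + D <= tau (Z k) w]|)%N.
Proof.
move=> tau_le; have tau_gt0 := hitting_time_gt0 Zt w.
have D_n : (tau Zt w + D <= n.+1)%N by lia.
by have := card_hitting_time_ge w D_n; rewrite addKn.
Qed.

Lemma card_unhit_subregions w D : (n - D < tau Zt w)%N ->
  (#|I| - D <= #|[pred k | n < tau (Z k) w]|)%N.
Proof.
move=> tau_gt; apply: leq_trans (card_hitting_time_ge w (leqnn n.+1)).
by rewrite leq_sub2l //; lia.
Qed.

End disjoint_subregions.
End hitting_time_order.

Section averaging.
Variables (R : realType) (dT : measure_display) (T : measurableType dT).
Variables (I : finType) (E : I -> T -> bool) (A : set T).
Hypothesis mA : measurable A.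
Hypothesis mE : forall k, measurable [set w | E k w].

Lemma sum_measureI_ge_mult (mu : {measure set T -> \bar R}) (c : nat) :
  (forall w, A w -> c <= #|[pred k | E k w]|)%N ->
  (c%:R%:E * mu A <= \sum_(k : I) mu ([set w | E k w] `&` A))%E.
Proof.
move=> multA; rewrite -integral_cst //.
have mind k : measurable_fun A (fun w => (\1_[set w | E k w] w : R)%:E).
  exact/measurable_funTS/measurable_EFinP/measurable_indic.
under eq_bigr do rewrite -integral_indic //.
rewrite -ge0_integral_sum //; apply: ge0_le_integral => //.
- by move=> w _; rewrite lee_fin.
- exact: emeasurable_sum.
move=> w Aw; rewrite sumEFin lee_fin /cst.
have memE k : (w \in [set w | E k w]) = E k w by apply/idP/idP => [/set_mem|/mem_set].
rewrite (eq_bigr (fun k => if E k w then 1 else 0)) => [|k _]; last first.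
  by rewrite indicE memE; case: (E k w).
by rewrite -big_mkcond sumr_const ler_nat multA.
Qed.

Lemma exists_cond_prob_ge_mult (P : probability T R) (c : nat) :
  (0 < #|I|)%N -> (0 < P A)%E -> (forall w, A w -> c <= #|[pred k | E k w]|)%N ->
  exists k, c%:R / #|I|%:R <= cond_prob P [set w | E k w] A.
Proof.
move=> I_gt0 PA_gt0 multA.
have finP S : measurable S -> (fine (P S))%:E = P S.
  by move=> mS; exact/fineK/fin_num_measure.
have mEA k : measurable ([set w | E k w] `&` A) by exact: measurableI.
set p := fine (P A); have p_gt0 : 0 < p by rewrite -lte_fin finP.
have sum_ge : c%:R * p <= \sum_k fine (P ([set w | E k w] `&` A)).
  rewrite -lee_fin EFinM finP // -sumEFin (eq_bigr _ (fun k _ => finP _ (mEA k))).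
  exact: sum_measureI_ge_mult.
apply: contrapT => /forallNP small.
have lt_avg k : fine (P ([set w | E k w] `&` A)) < c%:R / #|I|%:R * p.
  by have /negP := small k; rewrite -ltNge ltr_pdivrMr.
have [k0 _] := card_gt0P I_gt0.
have nonempty : has predT (index_enum I) by apply/hasP; exists k0; rewrite ?mem_index_enum.
have sum_avg : \sum_(k : I) c%:R / #|I|%:R * p = c%:R * p.
  by rewrite sumr_const -mulr_natr; field; rewrite pnatr_eq0 -lt0n.
have := ltr_sum nonempty (fun k _ => lt_avg k).
by rewrite sum_avg ltNge sum_ge.
Qed.

End averaging.

Lemma half_le_uphalf_div (R : realFieldType) (N : nat) :
  (0 < N)%N -> 1 / 2 <= (N - N./2)%:R / N%:R :> R.
Proof.
move=> N_gt0; have : (N <= (N - N./2) * 2)%N by have := odd_double_half N; lia.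
rewrite -(ler_nat R) natrM => le_N.
rewrite ler_pdivlMr ?ltr0n //; lra.
Qed.

Theorem corollary1 (R : realType) (d n : nat) (dT : measure_display)
  (T : measurableType dT) (P : probability T R) (m : nat -> nat) (mstar : nat)
  (y : rpoint R d -> R) (eps : rpoint R d -> T -> R)
  (U : forall t : nat, T -> (m t).-tuple R) (Ustar : T -> mstar.-tuple R)
  (next : forall t : nat, (t.-tuple (rpoint R d * R) * (m t).-tuple R)%type -> rpoint R d)
  (out : (n.-tuple (rpoint R d * R) * mstar.-tuple R)%type -> rpoint R d)
  (Zt : set (rpoint R d)) (Z : 'I_(3 ^ d) -> set (rpoint R d)) :
  admissible P y eps U Ustar next out ->
  measurable Zt -> Zt `<=` @unit_cube R d ->
  (forall k, measurable (Z k)) -> (forall k, Z k `<=` Zt) ->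
  (forall k l, k != l -> Z k `&` Z l = set0) ->
  let Delta := (3 ^ d)./2 in
  let tau := hitting_time y eps U next n in
  let A := [set w | (tau Zt w <= n - Delta)%N] in
  (((0 < P A)%E ->
     exists k1 : 'I_(3 ^ d),
       1 / 2 <= cond_prob P [set w | (tau Zt w + Delta <= tau (Z k1) w)%N] A) /\
   ((P A < 1)%E ->
     exists k2 : 'I_(3 ^ d),
       1 / 2 <= cond_prob P [set w | (n < tau (Z k2) w)%N]
                              [set w | (n - Delta < tau Zt w)%N])).
Proof.
move=> [mU [_ [my [meps [mnext _]]]]] mZt _ mZ sub_Zt disjZ Delta tau A.
have mtau Z' : measurable Z' -> measurable_fun setT (tau Z').
  exact: measurable_hitting_time.
have mA : measurable A := measurable_nat_pred (fun a => a <= n - Delta)%N (mtau _ mZt).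
have N_gt0 : (0 < #|'I_(3 ^ d)|)%N by rewrite card_ord expn_gt0.
have half_le : 1 / 2 <= (#|'I_(3 ^ d)| - Delta)%:R / #|'I_(3 ^ d)|%:R :> R.
  by rewrite card_ord; apply: half_le_uphalf_div; rewrite expn_gt0.
split => [PA_gt0 | PA_lt1].
  have mlate k := measurable_nat_rel (fun a b => a + Delta <= b)%N (mtau _ mZt) (mtau _ (mZ k)).
  have [k half_k] := exists_cond_prob_ge_mult mA mlate N_gt0 PA_gt0
    (fun w Aw => card_late_subregions sub_Zt disjZ Aw).
  by exists k; exact: le_trans half_le half_k.
have PB_gt0 : (0 < P [set w | (n - Delta < tau Zt w)%N])%E.
  rewrite (_ : [set w | _] = ~` A) ?probability_setC ?sube_gt0 //.
  by apply/seteqP; split => w /=; rewrite ltnNge => /negP.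
have mB := measurable_nat_pred (fun a => n - Delta < a)%N (mtau _ mZt).
have munhit k := measurable_nat_pred (fun a => n < a)%N (mtau _ (mZ k)).
have [k half_k] := exists_cond_prob_ge_mult mB munhit N_gt0 PB_gt0
  (fun w Bw => card_unhit_subregions sub_Zt disjZ Bw).
by exists k; exact: le_trans half_le half_k.
Qed.
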